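(* For $n\ge1$, the map $$\sigma\mapsto\big(\Delta(\sigma^{(n-1)}),\dots,\Delta(\sigma''),\Delta(\sigma'),\Delta(\sigma)\big)$$ is a bijection from $\mathfrak{S}_n$ onto the set of $n$-chains of Dyck shapes.
   Context: Permutations $\sigma\in\mathfrak{S}_n$ are written as words $\sigma_1\cdots\sigma_n$, with the conventions $\sigma_0=0$, $\sigma_{n+1}=n+1$. A value $\sigma_i$ ($1\le i\le n$) is a peak if $\sigma_{i-1}<\sigma_i>\sigma_{i+1}$, a valley if $\sigma_{i-1}>\sigma_i<\sigma_{i+1}$, a double ascent if $\sigma_{i-1}<\sigma_i<\sigma_{i+1}$, a double descent if $\sigma_{i-1}>\sigma_i>\sigma_{i+1}$. The profile $\Delta(\sigma)$ is the word $w_1\cdots w_{2n}$ over $\{\nearrow,\searrow\}$ where, for each value $j\in\{1,\dots,n\}$, $w_{2j-1}w_{2j}$ is $\nearrow\nearrow$ if $j$ is a valley, $\searrow\searrow$ if $j$ is a peak, $\nearrow\searrow$ if $j$ is a double ascent, $\searrow\nearrow$ if $j$ is a double descent. $\sigma'\in\mathfrak{S}_{n-1}$ is obtained from $\sigma$ by deleting the letter $n$; $\sigma^{(0)}=\sigma$ and $\sigma^{(i+1)}=(\sigma^{(i)})'$, so $\sigma^{(n-i)}\in\mathfrak{S}_i$. A Dyck path of length $2m$ is a lattice path from $(0,0)$ to $(2m,0)$ with steps $\nearrow=(1,1)$, $\searrow=(1,-1)$ never going below the $x$-axis; $P(x)$ denotes its height at abscissa $x$. A cell is a point $(a,b)\in\mathbb{Z}^2$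 with $b\ge0$, $a+b$ even (the tilted square with vertices $(a,b),(a+1,b\pm1),(a+2,b)$). The Dyck shape of $P$ (length $2m$) is $S(P)=\{(a,b): b\ge0,\ a+b\text{ even},\ 0\le a\le 2m-2,\ b+1\le P(a+1)\}$. Cells are adjacent if they differ by $(\pm1,\pm1)$. A ribbon is a nonempty set of cells, connected for adjacency, containing no four cells $(a,b),(a+1,b+1),(a+1,b-1),(a+2,b)$. For Dyck paths $D$ of length $2m$ and $E$ of length $2m+2$, $D\sqsubset E$ means $S(D)\subseteq S(E)$ and $S(E)\setminus S(D)$ is a ribbon. An $n$-chain of Dyck shapes is a sequence $D_1\sqsubset\cdots\sqsubset D_n$ of Dyck paths with $D_i$ of length $2i$. *)

From mathcomp Require Import all_boot all_order all_algebra all_fingroup.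
Set Implicit Arguments. Unset Strict Implicit. Unset Printing Implicit Defensive.
Import GRing.Theory Num.Theory.

(* sigma : 'S_n is viewed as the word sigma_1 ... sigma_n over {1..n},
   with sigma_i = (sigma (i-1)) + 1. *)
Definition perm_word (n : nat) (s : 'S_n) : seq nat :=
  [seq (s i).+1 | i <- enum 'I_n].

(* sigma' : delete the letter m from a word of length m (a permutation of 1..m). *)
Definition del_max (w : seq nat) : seq nat := filter (fun x => x != size w) w.

Definition derived (k : nat) (w : seq nat) : seq nat := iter k del_max w.

(* Neighbours of the value j in word w of length m,
   with conventions sigma_0 = 0 and sigma_(m+1) = m+1. *)
Definition prev_of (w : seq nat) (j : nat) : nat := nth 0 (0 :: w) (index j w).
Definition next_of (w : seq nat) (j : nat) : nat := nth (size w).+1 w (index j w).+1.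

Definition is_peak (w : seq nat) j := (prev_of w j < j) && (j > next_of w j).
Definition is_valley (w : seq nat) j := (prev_of w j > j) && (j < next_of w j).
Definition is_dasc (w : seq nat) j := (prev_of w j < j) && (j < next_of w j).
Definition is_ddesc (w : seq nat) j := (prev_of w j > j) && (j > next_of w j).

(* Steps: true = up (1,1), false = down (1,-1). *)
Definition profile_letters (w : seq nat) (j : nat) : seq bool :=
  if is_valley w j then [:: true; true]
  else if is_peak w j then [:: false; false]
  else if is_dasc w j then [:: true; false]
  else if is_ddesc w j then [:: false; true]
  else [::].

Definition profile (w : seq nat) : seq bool :=
  flatten [seq profile_letters w j | j <- iota 1 (size w)].

Definition chain_of (n : nat) (s : 'S_n) : seq (seq bool) :=
  [seq profile (derived (n - i) (perm_word s)) | i <- iota 1 n].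

Definition step (b : bool) : int := if b then 1%R else (-1)%R.

Definition height (P : seq bool) (x : nat) : int :=
  (\sum_(b <- take x P) step b)%R.

Definition is_dyck (m : nat) (P : seq bool) : Prop :=
  size P = (2 * m)%N /\ (forall x, x <= size P -> (0 <= height P x)%R)
  /\ height P (size P) = 0%R.

Definition cell := (int * int)%type.

Definition is_cell (c : cell) : Prop :=
  (0 <= c.2)%R /\ ~~ odd `|(c.1 + c.2)%R|%N.

Definition shape (P : seq bool) (c : cell) : Prop :=
  is_cell c /\ (0 <= c.1)%R /\ (c.1 <= Posz (size P) - 2)%R /\
  (exists a : nat, c.1 = Posz a /\ (c.2 + 1 <= height P a.+1)%R).

Definition adjacent (c d : cell) : bool :=
  ((d.1 == c.1 + 1) || (d.1 == c.1 - 1))%R && ((d.2 == c.2 + 1) || (d.2 == c.2 - 1))%R.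

Definition connected_cells (R : cell -> Prop) : Prop :=
  forall c d, R c -> R d ->
    exists p : seq cell,
      (forall e, e \in p -> R e) /\
      path adjacent c p /\ last c p = d.

Definition ribbon (R : cell -> Prop) : Prop :=
  (exists c, R c) /\ (forall c, R c -> is_cell c) /\ connected_cells R /\
  ~ (exists a b : int,
        R (a, b) /\ R (a + 1, b + 1)%R /\ R (a + 1, b - 1)%R /\ R (a + 2, b)%R).

Definition sqsub (D E : seq bool) : Prop :=
  (forall c, shape D c -> shape E c) /\
  ribbon (fun c => shape E c /\ ~ shape D c).

Definition is_chain (n : nat) (c : seq (seq bool)) : Prop :=
  size c = n /\
  (forall i, i < n -> is_dyck i.+1 (nth [::] c i)) /\
  (forall i, i.+1 < n -> sqsub (nth [::] c i) (nth [::] c i.+1)).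

(* Write the profile of a permutation word as the pairs [(j < next j, j < prev j)].
   Inserting the maximum n+1 between the neighbours x and y of a word w of size n turns
   the first letter of x and the second letter of y into up steps; only the one of the
   larger of x, y was a down step.  So Delta(w with n+1 inserted) is Delta(w) with one
   down step turned up, followed by two down steps (or Delta(w) followed by an up and a
   down step when n+1 is appended), and every down step of Delta(w) is reached by
   exactly one insertion position.  Geometrically, such an E runs two units above D
   from the flipped step on, and S(E) \ S(D) is the ribbon of cells just below E from
   that column on.  Conversely, if D ⊏ E then E never drops below D, connectivity of the
   ribbon forces E to stay strictly above D once it has left it, and the absence of a
   2x2 square in the ribbon bounds the gap by 2; so E is of the above form.  Induction
   on n, deleting the maximal letter, gives the bijection. *)

From Pilot Require Import Defs.
From mathcomp Require Import all_boot all_order all_algebra all_fingroup zify.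
Import Order.TTheory GRing.Theory Num.Theory.
(* [Defs.shape] must take precedence over [seq.shape]. *)
Import Defs.
Set Implicit Arguments. Unset Strict Implicit. Unset Printing Implicit Defensive.

Lemma height0 P : height P 0 = 0%R.
Proof. by rewrite /height take0 big_nil. Qed.

Lemma heightS P x : height P x.+1 =
  (height P x + (if (x < size P)%N then step (nth false P x) else 0))%R.
Proof.
rewrite /height; case: ltnP => h.
  by rewrite (take_nth false h) -cats1 big_cat big_seq1.
by rewrite !take_oversize ?addr0 //; apply: leqW.
Qed.

Lemma height_oversize P x : (size P <= x)%N -> height P x = height P (size P).
Proof. by move=> h; rewrite /height !take_oversize. Qed.

Lemma height_cat P Q x : height (P ++ Q) x = (height P x + height Q (x - size P))%R.
Proof.
rewrite /height take_cat; case: ltnP => h.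
  have -> : (x - size P = 0)%N by apply/eqP; rewrite subn_eq0 ltnW.
  by rewrite take0 big_nil addr0.
by rewrite big_cat (take_oversize h).
Qed.

Lemma heightS_bounds P x : (height P x - 1 <= height P x.+1 <= height P x + 1)%R.
Proof. rewrite heightS; case: ifP => _; [case: nth => /=|]; lia. Qed.

Lemma heightS_cases P x : (x < size P)%N ->
  height P x.+1 = (height P x + 1)%R \/ height P x.+1 = (height P x - 1)%R.
Proof. by move=> h; rewrite heightS h; case: nth; [left|right]. Qed.

Lemma height_parity P x : (x <= size P)%N ->
  exists z : int, height P x = (Posz x - 2 * z)%R.
Proof.
elim: x => [|x IH] h; first by exists 0%R; rewrite height0.
have [z Hz] := IH (ltnW h).
rewrite heightS h Hz; case: nth => /=; [exists z | exists (z + 1)%R]; lia.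
Qed.

Lemma height1 P : (0 < size P)%N -> (0 <= height P 1)%R -> height P 1 = 1%R.
Proof. move=> hs; rewrite heightS height0 hs; case: nth => /=; lia. Qed.

Lemma height_set_nth_up P p x : (p < size P)%N -> nth false P p = false ->
  height (set_nth false P p true) x = (height P x + (if (p < x)%N then 2 else 0))%R.
Proof.
move=> hp hn; elim: x => [|x IH]; first by rewrite !height0.
have hs : size (set_nth false P p true) = size P.
  by rewrite size_set_nth; apply/maxn_idPr.
rewrite !heightS hs IH nth_set_nth /=.
case: (ltnP x (size P)) => hx.
  case: eqP => [->|hxp]; first by rewrite hn ltnn ltnSn /=; lia.
  have -> : (p < x.+1)%N = (p < x)%N by rewrite ltnS leq_eqVlt; case: eqP => // ?; subst.
  by rewrite addrAC.
by rewrite ltnS (leq_trans _ hx) ?(leq_trans (ltnW hp)) //; lia.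
Qed.

Lemma eq_from_height P Q : size P = size Q ->
  (forall x, (x <= size P)%N -> height P x = height Q x) -> P = Q.
Proof.
move=> hs hh; apply: (eq_from_nth (x0:=false)) => // i hi.
have := hh i.+1 hi; rewrite !heightS -hs hi (hh i (ltnW hi)).
by case: nth; case: nth => //=; lia.
Qed.

Lemma dyck_height_penultimate m E : is_dyck m.+1 E -> height E (2 * m).+1 = 1%R.
Proof.
move=> [sE [posE endE]]; rewrite sE in posE endE.
have := heightS_bounds E (2 * m).+1; have := posE (2 * m).+1 ltac:(lia).
have [z hz] := @height_parity E (2 * m).+1 ltac:(rewrite sE; lia).
rewrite (_ : 2 * m.+1 = (2 * m).+2)%N in endE; lia.
Qed.

Lemma is_cellP (c : cell) :
  is_cell c <-> (0 <= c.2)%R /\ exists y : int, (c.1 + c.2 = 2 * y)%R.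
Proof.
rewrite /is_cell; split=> -[h1 h2]; split => //.
  move: h2; case: (c.1 + c.2)%R => n ho.
    have ho' : ~~ odd n := ho.
    exists (Posz (n./2)); move: (odd_double_half n); rewrite (negbTE ho') /=.
    lia.
  have ho' : ~~ odd n.+1 := ho.
  exists (- Posz ((n.+1)./2))%R; move: (odd_double_half n.+1); rewrite (negbTE ho') /=.
  rewrite NegzE; lia.
by case: h2 => y ->; rewrite abszM /= mul2n odd_double.
Qed.

Lemma shapeP P (a b : int) : shape P (a, b) <->
  exists k : nat, a = k /\ (0 <= b)%R /\ (exists y : int, (Posz k + b = 2 * y)%R) /\
    (k.+2 <= size P)%N /\ (b + 1 <= height P k.+1)%R.
Proof.
rewrite /shape is_cellP /=; split.
  move=> [[hb [y hy]] [h0 [h1 [k [hk hh]]]]]; exists k; subst a.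
  by do !split => //; [exists y | lia].
move=> [k [-> [hb [[y hy] [hk hh]]]]]; do !split => //; first by exists y.
  lia.
by exists k.
Qed.

Lemma adjacentP (c d : cell) : adjacent c d <->
  ((d.1 = c.1 + 1 \/ d.1 = c.1 - 1) /\ (d.2 = c.2 + 1 \/ d.2 = c.2 - 1))%R.
Proof.
rewrite /adjacent; split.
  by case/andP => /orP [/eqP|/eqP] ? /orP [/eqP|/eqP] ?; split; auto.
by case=> [[]->[]->]; rewrite !eqxx ?orbT.
Qed.

Lemma adjacent_path_column (c : cell) p (t : int) : path adjacent c p ->
  (c.1 <= t <= (last c p).1)%R -> exists2 e, e \in c :: p & e.1 = t.
Proof.
elim: p c => [|e p IH] c /=.
  by move=> _ h; exists c; rewrite ?mem_head //; lia.
move=> /andP [hce hp] ht.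
case: (eqVneq t c.1) => [->|hne]; first by exists c; rewrite ?mem_head.
have [e' he' <-] : exists2 e', e' \in e :: p & e'.1 = t.
  by apply: IH => //; move/adjacentP: hce => [h1 _]; lia.
by exists e' => //; rewrite in_cons he' orbT.
Qed.

Lemma adjacent_path_iota (f : nat -> cell) n :
  (forall i, (i < n)%N -> adjacent (f i) (f i.+1)) ->
  path adjacent (f 0%N) [seq f i | i <- iota 1 n] /\
  last (f 0%N) [seq f i | i <- iota 1 n] = f n.
Proof.
elim: n f => [|n IH] f hf //=.
have -> : iota 2 n = [seq 1 + i | i <- iota 1 n]%N by rewrite -iotaDl.
rewrite -map_comp.
have [h1 h2] := IH (fun i => f i.+1) (fun i hi => hf i.+1 hi).
by rewrite (hf 0%N).
Qed.

(* [E] arises from [D] by turning its down step number [p] into an up step (or by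
   nothing if [p = size D]) and appending two steps back to the axis. *)
Definition lifts (D E : seq bool) (p : nat) : Prop :=
  (p <= size D)%N /\ size E = (size D).+2 /\
  (forall x, (x <= size D)%N -> height E x = height D x + (if (p < x)%N then 2 else 0))%R /\
  height E (size D).+1 = 1%R /\ height E (size D).+2 = 0%R.

Lemma lifts_cat_up_down D : height D (size D) = 0%R ->
  lifts D (D ++ [:: true; false]) (size D).
Proof.
move=> endD; split=> //; split; first by rewrite size_cat addn2.
split.
  move=> x hx; rewrite height_cat ltnNge hx (_ : x - size D = 0)%N ?height0 //; lia.
rewrite !height_cat (height_oversize (leqnSn _)) (height_oversize (leqW (leqnSn _))) endD.
have -> : ((size D).+1 - size D = 1)%N by lia.
have -> : ((size D).+2 - size D = 2)%N by lia.
by rewrite /height /= !big_cons !big_nil /=; split; lia.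
Qed.

Lemma lifts_set_nth_up D p : height D (size D) = 0%R ->
  (p < size D)%N -> nth false D p = false ->
  lifts D (set_nth false D p true ++ [:: false; false]) p.
Proof.
move=> endD hp hn.
have hs : size (set_nth false D p true) = size D.
  by rewrite size_set_nth; apply/maxn_idPr; lia.
split; first exact: ltnW.
split; first by rewrite size_cat hs addn2.
split.
  move=> x hx; rewrite height_cat hs height_set_nth_up //.
  by rewrite (_ : x - size D = 0)%N ?height0 ?addr0 //; lia.
rewrite !height_cat hs !height_set_nth_up //.
rewrite (height_oversize (leqnSn _)) (height_oversize (leqW (leqnSn _))) endD.
have -> : ((size D).+1 - size D = 1)%N by lia.
have -> : ((size D).+2 - size D = 2)%N by lia.
rewrite /height /= !big_cons !big_nil /= ltnS (ltnW hp) ltnS (leqW (ltnW hp)).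
by split; lia.
Qed.

Lemma dyck_lifts m D E p : is_dyck m D -> lifts D E p -> is_dyck m.+1 E.
Proof.
move=> [sD [posD endD]] [_ [sE [hE [h1 h2]]]].
rewrite sD in posD endD sE hE h1 h2.
split; first by rewrite sE; lia.
split; last by rewrite sE.
move=> x; rewrite sE => hx.
case: (leqP x (2 * m)) => hx2.
  by rewrite hE //; have := posD x ltac:(lia); case: ifP => _; lia.
have [->|->] : x = (2 * m).+1 \/ x = (2 * m).+2 by lia.
  by rewrite h1.
by rewrite h2.
Qed.

Lemma lifts_new_cellsP m D E p a b : is_dyck m D -> lifts D E p ->
  (shape E (a, b) /\ ~ shape D (a, b)) <->
  exists k : nat, a = k /\ (p <= k <= 2 * m)%N /\ b = (height E k.+1 - 1)%R.
Proof.
move=> [sD [posD endD]] [hp [sE [hE [h1 h2]]]].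
rewrite sD in posD endD hp sE hE h1 h2.
split.
  move=> [/shapeP [k [-> [hb [[y hy] [hk hh]]]]] nD]; exists k; split => //.
  case: (leqP k.+2 (2 * m)) => hk2.
    have hlt : (height D k.+1 < b + 1)%R.
      rewrite ltNge; apply/negP => hle; apply: nD; apply/shapeP; exists k.
      by do !split => //; [exists y | rewrite sD].
    have [z hz] := @height_parity D k.+1 ltac:(rewrite sD; lia).
    move: hh; rewrite hE; last by lia.
    by case: ifP => hpk; lia.
  move: hh hy; rewrite sE in hk.
  have [ek|->] : k.+1 = 2 * m \/ k = 2 * m by lia.
    rewrite ek hE // endD; case: ifP => hpk; last by lia.
    by move=> hh hy; split; lia.
  by rewrite h1 => hh hy; split; lia.
move=> [k [-> [/andP [hk1 hk2] ->]]].
have hge : (1 <= height E k.+1)%R.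
  case: (ltnP k (2 * m)) => hk3.
    by rewrite hE //; have := posD k.+1 ltac:(lia); case: ifP => h; lia.
  have -> : k = 2 * m by lia.
  by rewrite h1.
have [z hz] := @height_parity E k.+1 ltac:(rewrite sE; lia).
split.
  apply/shapeP; exists k; do !split => //; first lia.
    by exists (Posz k - z)%R; lia.
  by rewrite sE; lia.
  lia.
move/shapeP => [k' [ek' [_ [_ [hk' hh]]]]].
have ekk : k' = k by lia.
subst k'; move: hh; rewrite sD in hk'; rewrite hE; last by lia.
by case: ifP => h; lia.
Qed.

Lemma sqsub_lifts m D E p : is_dyck m D -> lifts D E p -> sqsub D E.
Proof.
move=> dD lDE; have HR := lifts_new_cellsP _ _ dD lDE.
have [sD [posD endD]] := dD; have [hp [sE [hE [h1 h2]]]] := lDE.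
rewrite sD in posD endD hp sE hE h1 h2.
split.
  move=> [a b] /shapeP [k [-> [hb [[y hy] [hk hh]]]]]; apply/shapeP; exists k.
  do !split => //; first by exists y.
    by rewrite sE; rewrite sD in hk; lia.
  rewrite sD in hk; rewrite hE; last by lia.
  by case: ifP => _; lia.
pose g (k : nat) : cell := (Posz k, height E k.+1 - 1)%R.
have gR k : (p <= k <= 2 * m)%N -> shape E (g k) /\ ~ shape D (g k).
  by move=> hk; apply/HR; exists k.
have gadj k : (k < 2 * m)%N -> adjacent (g k) (g k.+1) /\ adjacent (g k.+1) (g k).
  move=> hk; have := @heightS_cases E k.+1 ltac:(rewrite sE; lia).
  by move=> hs; split; apply/adjacentP => /=; lia.
split; first by exists (g (2 * m)%N); apply: gR; rewrite hp leqnn.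
split; first by move=> c [[hc _] _].
split.
  move=> [a1 b1] [a2 b2] /HR [k1 [-> [hk1 ->]]] /HR [k2 [-> [hk2 ->]]].
  case: (leqP k1 k2) => hk.
    have [hpath hlast] := @adjacent_path_iota (fun i => g (k1 + i)%N) (k2 - k1)
      ltac:(by move=> i hi; rewrite /= addnS; case: (gadj (k1 + i)%N ltac:(lia))).
    rewrite addn0 in hpath hlast.
    exists [seq g (k1 + i)%N | i <- iota 1 (k2 - k1)]; split.
      by move=> e /mapP [i hi ->]; apply: gR; rewrite mem_iota in hi; lia.
    by split; last rewrite hlast subnKC.
  have [hpath hlast] := @adjacent_path_iota (fun i => g (k1 - i)%N) (k1 - k2)
    ltac:(move=> i hi /=; rewrite (_ : k1 - i = (k1 - i.+1).+1)%N; last lia;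
          by case: (gadj (k1 - i.+1)%N ltac:(lia))).
  rewrite subn0 in hpath hlast.
  exists [seq g (k1 - i)%N | i <- iota 1 (k1 - k2)]; split.
    by move=> e /mapP [i hi ->]; apply: gR; rewrite mem_iota in hi; lia.
  by split; last rewrite hlast subKn // ltnW.
move=> [a [b [_ [/HR [k [ek [_ eb]]] [/HR [k' [ek' [_ eb']]] _]]]]].
have ekk : k' = k by lia.
by subst k'; lia.
Qed.

Section SqsubLifts.
Variables (m : nat) (D E : seq bool).
Hypotheses (m_gt0 : (0 < m)%N) (dD : is_dyck m D) (dE : is_dyck m.+1 E) (DE : sqsub D E).

Let sD : size D = (2 * m)%N. Proof. by case: dD. Qed.
Let sE : size E = (2 * m).+2. Proof. by case: dE => -> _; lia. Qed.
Let posD x : (x <= 2 * m)%N -> (0 <= height D x)%R.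
Proof. by case: dD => _ [posD _] hx; apply: posD; rewrite sD. Qed.
Let endD : height D (2 * m) = 0%R. Proof. by case: dD => _ [_]; rewrite sD. Qed.
Let posE x : (x <= (2 * m).+2)%N -> (0 <= height E x)%R.
Proof. by case: dE => _ [posE _] hx; apply: posE; rewrite sE. Qed.
Let endE : height E (2 * m).+2 = 0%R. Proof. by case: dE => _ [_]; rewrite sE. Qed.
Let penE : height E (2 * m).+1 = 1%R. Proof. exact: dyck_height_penultimate. Qed.

Lemma sqsub_new_cell (k : nat) (b : int) : (0 <= b)%R ->
  (exists y : int, Posz k + b = 2 * y)%R -> (k <= 2 * m)%N ->
  (b + 1 <= height E k.+1)%R -> (height D k.+1 < b + 1)%R ->
  shape E (Posz k, b) /\ ~ shape D (Posz k, b).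
Proof.
move=> hb hy hk hE hD; split.
  by apply/shapeP; exists k; do !split => //; rewrite sE; lia.
move/shapeP => [k' [ek' [_ [_ [_ hh]]]]].
have ekk : k' = k by lia.
by subst k'; lia.
Qed.

Lemma sqsub_new_cell_column a b : shape E (a, b) /\ ~ shape D (a, b) ->
  exists k : nat, a = k /\ (k <= 2 * m)%N /\
    ((k < 2 * m)%N -> (height D k.+1 < height E k.+1)%R).
Proof.
move=> [/shapeP [k [-> [hb [[y hy] [hk hh]]]]] nD]; exists k; split => //.
rewrite sE in hk; split; first lia.
move=> hk2; case: (leqP k.+2 (2 * m)) => hk3.
  have : ~ (b + 1 <= height D k.+1)%R.
    move=> hle; apply: nD; apply/shapeP; exists k; do !split => //; first by exists y.
    by rewrite sD.
  lia.
have ek : k.+1 = 2 * m by lia.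
by rewrite ek endD; move: hh; rewrite ek; lia.
Qed.

Lemma sqsub_height_parity x : (x <= 2 * m)%N ->
  exists z : int, (height E x - height D x = 2 * z)%R.
Proof.
move=> hx; have [z1 hz1] := @height_parity D x ltac:(rewrite sD; lia).
have [z2 hz2] := @height_parity E x ltac:(rewrite sE; lia).
by exists (z1 - z2)%R; lia.
Qed.

Lemma sqsub_height_ge x : (x <= 2 * m)%N -> (height D x <= height E x)%R.
Proof.
case: x => [|k] hk; first by rewrite !height0.
case: (leqP (2 * m) k.+1) => hk2.
  have -> : k.+1 = 2 * m by lia.
  by rewrite endD; apply: posE; lia.
case: (lerP (height D k.+1) 0) => hD0; first by have := @posE k.+1 ltac:(lia); lia.
have [z hz] := @height_parity D k.+1 ltac:(rewrite sD; lia).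
have : shape D (Posz k, height D k.+1 - 1)%R.
  apply/shapeP; exists k; do !split => //; first lia.
  - by exists (Posz k - z)%R; lia.
  - by rewrite sD; lia.
  - lia.
move/DE.1/shapeP => [k' [ek' [_ [_ [_ hh]]]]].
have ekk : k' = k by lia.
by subst k'; lia.
Qed.

(* The new cells form a connected set reaching the last column [2m]. *)
Lemma sqsub_height_gt_persists x x' : (1 <= x)%N -> (x <= x')%N -> (x' <= 2 * m)%N ->
  (height D x < height E x)%R -> (height D x' < height E x')%R.
Proof.
case: x => [|k] // _ hxx' hx' hlt.
case: (leqP (2 * m) k.+1) => hk2; first by have -> : x' = k.+1 by lia.
have [z hz] := sqsub_height_parity (x := k.+1) ltac:(lia).
have cR : shape E (Posz k, height D k.+1 + 1)%R /\ ~ shape D (Posz k, height D k.+1 + 1)%R.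
  apply: sqsub_new_cell; first by have := @posD k.+1 ltac:(lia); lia.
  - have [z' hz'] := @height_parity D k.+1 ltac:(rewrite sD; lia).
    by exists (Posz k + 1 - z')%R; lia.
  - lia.
  - lia.
  - lia.
have c0R : shape E (Posz (2 * m), 0%R) /\ ~ shape D (Posz (2 * m), 0%R).
  apply: sqsub_new_cell => //; first by exists (Posz m); lia.
    by rewrite penE.
  by rewrite (@height_oversize D (2 * m).+1) ?sD // endD; lia.
have [p [pall [ppath plast]]] := DE.2.2.2.1 _ _ cR c0R.
have [e he he1] := @adjacent_path_column _ p (Posz x'.-1) ppath ltac:(rewrite plast /=; lia).
have eR : shape E e /\ ~ shape D e.
  by move: he; rewrite in_cons => /orP [/eqP ->|/pall].
case: e he he1 eR => a b _ /= ea /sqsub_new_cell_column [k' [ek' [hk' hlt']]].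
have ex : k'.+1 = x' by lia.
by rewrite -ex; apply: hlt'; lia.
Qed.

(* Beyond [+2], the four cells of a square would all be new. *)
Lemma sqsub_height_le_add2 x : (x <= 2 * m)%N -> (height E x <= height D x + 2)%R.
Proof.
move=> hx; case: (leqP (2 * m) x) => hx2.
  have -> : x = 2 * m by lia.
  by rewrite endD; have := penE; have := heightS_bounds E (2 * m); lia.
have [z hz] := sqsub_height_parity hx.
have hD1 : height D 1 = 1%R by apply: height1; [rewrite sD; lia | apply: posD; lia].
have hE1 : height E 1 = 1%R by apply: height1; [rewrite sE; lia | apply: posE; lia].
case: (lerP (height E x) (height D x + 2)) => // hgt; exfalso.
case: x hx hx2 hz hgt => [|[|j]] hx hx2 hz hgt.
- by move: hgt; rewrite !height0; lia.
- by move: hgt; rewrite hD1 hE1; lia.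
apply: DE.2.2.2.2; exists (Posz j), (height D j.+2 + 2)%R.
have sE1 := heightS_bounds E j.+1; have sE2 := heightS_bounds E j.+2.
have sD1 := heightS_bounds D j.+1; have sD2 := heightS_bounds D j.+2.
have hDp := @posD j.+2 ltac:(lia).
have [z' hz'] := @height_parity D j.+2 ltac:(rewrite sD; lia).
split; last split; last split.
- by apply: sqsub_new_cell; try lia; exists (Posz j + 2 - z')%R; lia.
- rewrite (_ : Posz j + 1 = Posz j.+1)%R; last lia.
  by apply: sqsub_new_cell; try lia; exists (Posz j + 3 - z')%R; lia.
- rewrite (_ : Posz j + 1 = Posz j.+1)%R; last lia.
  by apply: sqsub_new_cell; try lia; exists (Posz j + 2 - z')%R; lia.
- rewrite (_ : Posz j + 2 = Posz j.+2)%R; last lia.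
  by apply: sqsub_new_cell; try lia; exists (Posz j + 3 - z')%R; lia.
Qed.

Lemma lifts_of_sqsub : exists p, lifts D E p.
Proof.
pose P x := (x <= 2 * m)%N && (height E x == height D x).
have exP : exists x, P x by exists 0%N; rewrite /P leq0n !height0 eqxx.
have ubP x : P x -> (x <= 2 * m)%N by case/andP.
have [p /andP [hp /eqP hEq] hmax] := ex_maxnP exP ubP.
exists p; rewrite /lifts sD; do !split => //.
move=> x hx; have [z hz] := sqsub_height_parity hx.
have := sqsub_height_ge hx; have := sqsub_height_le_add2 hx.
case: ifP => hpx.
  have : height E x != height D x.
    by apply/negP => /eqP heq; have := hmax x; rewrite /P hx heq eqxx => /(_ isT); lia.
  by move/eqP; lia.
case: x hx hz hpx => [|x] hx hz hpx; first by rewrite !height0; lia.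
case: (ltrP (height D x.+1) (height E x.+1)) => hlt; last lia.
have hxp : (x.+1 <= p)%N by rewrite leqNgt hpx.
by have := sqsub_height_gt_persists (ltn0Sn x) hxp hp hlt; lia.
Qed.

End SqsubLifts.

Lemma lifts_uniq D E E' p : lifts D E p -> lifts D E' p -> E = E'.
Proof.
move=> [_ [sE [hE [h1 h2]]]] [_ [sE' [hE' [h1' h2']]]].
apply: eq_from_height; first by rewrite sE sE'.
move=> x; rewrite sE => hx.
case: (leqP x (size D)) => hx2; first by rewrite hE // hE'.
have [->|->] : x = (size D).+1 \/ x = (size D).+2 by lia.
  by rewrite h1 h1'.
by rewrite h2 h2'.
Qed.

Lemma lifts_down_step D E p : lifts D E p -> (p < size D)%N -> nth false D p = false.
Proof.
move=> [_ [_ [hE _]]] hp.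
have := heightS D p; have := heightS_bounds E p.
rewrite (hE p) ?(ltnW hp) // (hE p.+1) // ltnSn hp ltnn.
by case: nth => //=; lia.
Qed.

Lemma sqsub_dyck_cases m D E : (0 < m)%N -> is_dyck m D -> is_dyck m.+1 E -> sqsub D E ->
  E = D ++ [:: true; false] \/
  exists2 p, (p < size D)%N &
    nth false D p = false /\ E = set_nth false D p true ++ [:: false; false].
Proof.
move=> m0 dD dE DE; have [p lDE] := lifts_of_sqsub m0 dD dE DE.
have endD : height D (size D) = 0%R by case: dD => _ [].
case: (ltnP p (size D)) => hp.
  have Dp := lifts_down_step lDE hp.
  by right; exists p => //; split => //; apply: lifts_uniq lDE (lifts_set_nth_up endD hp Dp).
have ep : p = size D by case: lDE => ? _; lia.
by left; rewrite ep in lDE; apply: lifts_uniq lDE (lifts_cat_up_down endD).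
Qed.

Definition is_perm_word (w : seq nat) := uniq w /\ forall j, (j \in w) = (0 < j <= size w)%N.
Definition insert_max (k : nat) (w : seq nat) := take k w ++ (size w).+1 :: drop k w.

Lemma nth_insert_max (d : nat) w k p : (k <= size w)%N ->
  nth d (insert_max k w) p =
    if (p < k)%N then nth d w p else if p == k then (size w).+1 else nth d w p.-1.
Proof.
move=> hk; rewrite /insert_max nth_cat size_takel //.
case: ltnP => hp; first by rewrite nth_take.
case: eqP => [->|hne]; first by rewrite subnn.
have -> : (p - k = (p - k.+1).+1)%N by lia.
rewrite /= nth_drop; congr nth; lia.
Qed.

Lemma perm_insert_max w k : perm_eq (insert_max k w) ((size w).+1 :: w).
Proof.
rewrite /insert_max -cat1s perm_catCA /= cat_take_drop //.
Qed.

Lemma size_insert_max w k : size (insert_max k w) = (size w).+1.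
Proof. by rewrite (perm_size (perm_insert_max w k)). Qed.

Lemma is_perm_word_insert_max w k : is_perm_word w -> is_perm_word (insert_max k w).
Proof.
move=> [hu hm]; split.
  rewrite (perm_uniq (perm_insert_max w k)) /= hu hm; apply/andP; split => //; lia.
move=> j; rewrite (perm_mem (perm_insert_max w k)) size_insert_max in_cons hm.
apply/orP/idP; first by case=> [/eqP ->|]; lia.
move=> h; case: (eqVneq j (size w).+1) => [->|hne]; [left | right] => //; lia.
Qed.

Lemma del_max_insert_max w k : is_perm_word w -> del_max (insert_max k w) = w.
Proof.
move=> [hu hm]; rewrite /del_max size_insert_max /insert_max filter_cat /= eqxx /=.
rewrite -filter_cat cat_take_drop.
apply/all_filterP/allP => j hj; apply/negP => /eqP hj'; move: hj; rewrite hj' hm; lia.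
Qed.

Lemma insert_max_decomp n w : is_perm_word w -> size w = n.+1 ->
  exists w' k, [/\ is_perm_word w', size w' = n, (k <= n)%N & w = insert_max k w'].
Proof.
move=> [hu hm] hs.
have hin : n.+1 \in w by rewrite hm hs; lia.
set k := index n.+1 w.
have hk : (k < size w)%N by rewrite index_mem.
have ew : w = take k w ++ n.+1 :: drop k.+1 w.
  by rewrite -{1}(cat_take_drop k w) (drop_nth 0 hk) nth_index.
set w1 := take k w; set w2 := drop k.+1 w.
have s1 : size w1 = k by rewrite size_takel // ltnW.
have hu' := hu; rewrite ew cat_uniq in hu'.
case/and3P: hu' => u1 /hasPn h12 /andP [n2 u2].
have n1 : n.+1 \notin w1 by apply: h12; rewrite mem_head.
have sw : size (w1 ++ w2) = n.
  by have := congr1 size ew; rewrite !size_cat /= hs -/w1 -/w2; lia.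
exists (w1 ++ w2), k; split => //.
- split.
    rewrite cat_uniq u1 /=; apply/andP; split; last by [].
    apply/hasPn => x hx.
    by apply: h12; rewrite in_cons hx orbT.
  move=> j; rewrite sw mem_cat.
  have := hm j; rewrite {1}ew mem_cat in_cons hs.
  case: (eqVneq j n.+1) => [->|hne] /=.
    by rewrite (negbTE n1) (negbTE n2); lia.
  by move=> ->; lia.
- lia.
- rewrite /insert_max sw take_size_cat // drop_size_cat //.
Qed.

Definition profile_pair (w : seq nat) (j : nat) : seq bool :=
  [:: (j < next_of w j)%N; (j < prev_of w j)%N].

Lemma profile_letters_pair w j : is_perm_word w -> j \in w ->
  profile_letters w j = profile_pair w j.
Proof.
move=> [hu hm] hj; have hj' := hj; rewrite hm in hj'.
have hi : (index j w < size w)%N by rewrite index_mem.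
have hp : prev_of w j != j.
  rewrite /prev_of; case e: (index j w) => [|i] /=; first lia.
  have hi1 : (i.+1 < size w)%N by rewrite -e.
  rewrite -(nth_index 0 hj) e nth_uniq //; [lia | exact: ltnW].
have hq : next_of w j != j.
  rewrite /next_of; case: (ltnP (index j w).+1 (size w)) => h.
    rewrite -{2}(nth_index 0 hj) (set_nth_default 0) // nth_uniq //; lia.
  rewrite nth_default //; lia.
rewrite /profile_letters /is_valley /is_peak /is_dasc /is_ddesc /profile_pair.
move: hp hq; case: (ltngtP (prev_of w j) j) => h1; case: (ltngtP (next_of w j) j) => h2 //=.
Qed.

Lemma profile_pairsE w : is_perm_word w ->
  profile w = flatten [seq profile_pair w j | j <- iota 1 (size w)].
Proof.
move=> hw; rewrite /profile; congr flatten; apply/eq_in_map => j.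
rewrite mem_iota => hj; apply: profile_letters_pair => //; rewrite hw.2; lia.
Qed.

Lemma size_flatten_pairs (L : seq (seq bool)) : all (fun s => size s == 2) L ->
  size (flatten L) = (2 * size L)%N.
Proof.
elim: L => [|s L IH] //= /andP [/eqP hs hL]; rewrite size_cat hs IH //; lia.
Qed.

Lemma nth_flatten_pairs (L : seq (seq bool)) i : all (fun s => size s == 2) L ->
  nth false (flatten L) i = nth false (nth [::] L i./2) (odd i).
Proof.
elim: L i => [|s L IH] i /=; first by rewrite !nth_nil.
case/andP; case: s => [|a [|b [|]]] // _ hL.
case: i => [|[|i]] //=.
by rewrite IH // negbK.
Qed.

Lemma all_size_profile_pair w n : all (fun s => size s == 2) [seq profile_pair w j | j <- iota 1 n].
Proof. by apply/allP => s /mapP [j _ ->]. Qed.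

Lemma size_profile w : is_perm_word w -> size (profile w) = (2 * size w)%N.
Proof.
move=> hw; rewrite profile_pairsE // size_flatten_pairs ?all_size_profile_pair //.
by rewrite size_map size_iota.
Qed.

Lemma nth_flatten_profile_pairs w n i : (i < 2 * n)%N ->
  nth false (flatten [seq profile_pair w j | j <- iota 1 n]) i =
  nth false (profile_pair w (i./2).+1) (odd i).
Proof.
move=> hi; rewrite nth_flatten_pairs ?all_size_profile_pair // (nth_map 0); last first.
  by rewrite size_iota ltn_half_double -mul2n.
by rewrite nth_iota ?add1n // ltn_half_double -mul2n.
Qed.

Lemma nth_profile w i : is_perm_word w -> (i < 2 * size w)%N ->
  nth false (profile w) i = nth false (profile_pair w (i./2).+1) (odd i).
Proof. by move=> hw hi; rewrite profile_pairsE // nth_flatten_profile_pairs. Qed.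

Lemma index_insert_max w k j : is_perm_word w -> (k <= size w)%N -> j \in w ->
  index j (insert_max k w) = if (index j w < k)%N then index j w else (index j w).+1.
Proof.
move=> hw hk hj; have hi : (index j w < size w)%N by rewrite index_mem.
have hn := nth_index 0 hj.
have hu : uniq (insert_max k w) by case: (is_perm_word_insert_max k hw).
rewrite -{1}hn; set i := index j w.
case: ltnP => h.
  have <- : nth 0 (insert_max k w) i = nth 0 w i by rewrite nth_insert_max // h.
  by rewrite index_uniq // size_insert_max; lia.
have <- : nth 0 (insert_max k w) i.+1 = nth 0 w i.
  by rewrite nth_insert_max // ltnNge (leqW h) /=; case: eqP => //; lia.
by rewrite index_uniq // size_insert_max; lia.
Qed.

Lemma profile_pair_insert_max w k j : is_perm_word w -> (k <= size w)%N -> j \in w ->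
  (j < next_of (insert_max k w) j)%N = ((index j w).+1 == k) || (j < next_of w j)%N /\
  (j < prev_of (insert_max k w) j)%N = (index j w == k) || (j < prev_of w j)%N.
Proof.
move=> hw hk hj; have hi : (index j w < size w)%N by rewrite index_mem.
have hn := nth_index 0 hj.
have hjs : (0 < j <= size w)%N by rewrite -hw.2.
rewrite /next_of /prev_of index_insert_max // size_insert_max.
set i := index j w.
case: (ltnP i k) => h.
  split.
    rewrite nth_insert_max //; case: (ltnP i.+1 k) => h2.
      rewrite (ltn_eqF h2) /= (@set_nth_default _ w 0 (size w).+2 i.+1); last lia.
      by rewrite (@set_nth_default _ w 0 (size w).+1 i.+1); last lia.
    have hjn : (j < (size w).+1)%N by lia.
    case: eqP => [->|hne]; first by rewrite /= hjn.
    exfalso; lia.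
  case e: i => [|i0] /=; first by rewrite (@eq_sym _ 0) -e (gtn_eqF h).
  rewrite nth_insert_max; last lia.
  rewrite ifT; last lia.
  rewrite -e (ltn_eqF h) //.
split.
  rewrite nth_insert_max // ifF; last lia.
  rewrite ifF; last lia.
  rewrite (_ : (i.+1 == k) = false) /=; last lia.
  case: (ltnP i.+1 (size w)) => h3.
    by rewrite (@set_nth_default _ w 0) // (@set_nth_default _ w 0 (size w).+1).
  rewrite !nth_default //; lia.
rewrite /= nth_insert_max // ifF; last lia.
case: (eqVneq i k) => [->|hne]; first by rewrite /=; lia.
case e: i => [|i0]; first lia.
by [].
Qed.

Lemma profile_pair_insert_max_new w k : is_perm_word w -> (k <= size w)%N ->
  profile_pair (insert_max k w) (size w).+1 = [:: k == size w; false].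
Proof.
move=> hw hk; have hu : uniq (insert_max k w) by case: (is_perm_word_insert_max k hw).
have hidx : index (size w).+1 (insert_max k w) = k.
  have <- : nth 0 (insert_max k w) k = (size w).+1 by rewrite nth_insert_max // ltnn eqxx.
  by rewrite index_uniq // size_insert_max.
rewrite /profile_pair /next_of /prev_of hidx size_insert_max; congr [:: _; _].
  rewrite nth_insert_max // ifF; last lia.
  rewrite ifF; last lia.
  case: (ltnP k (size w)) => h.
    have : nth (size w).+2 w k \in w by rewrite mem_nth.
    rewrite /= hw.2; lia.
  rewrite /= nth_default //=; lia.
move: hu; case: k hk hidx => [|k] hk hidx hu /=; first by [].
rewrite nth_insert_max // ltnSn.
have : nth 0 w k \in w by rewrite mem_nth.
rewrite hw.2; lia.
Qed.

Lemma profile_insert_maxE w k : is_perm_word w -> (k <= size w)%N ->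
  profile (insert_max k w) =
  flatten [seq profile_pair (insert_max k w) j | j <- iota 1 (size w)] ++ [:: k == size w; false].
Proof.
move=> hw hk; rewrite profile_pairsE; last exact: is_perm_word_insert_max.
rewrite size_insert_max.
have -> : iota 1 (size w).+1 = iota 1 (size w) ++ [:: (size w).+1].
  by have := iotaD 1 (size w) 1; rewrite addn1 add1n => ->.
rewrite map_cat flatten_cat /=.
by have := profile_pair_insert_max_new hw hk; rewrite /profile_pair => ->.
Qed.

Lemma profile_insert_max_last w : is_perm_word w ->
  profile (insert_max (size w) w) = profile w ++ [:: true; false].
Proof.
move=> hw; rewrite profile_insert_maxE // eqxx profile_pairsE //; congr (flatten _ ++ _).
apply/eq_in_map => j; rewrite mem_iota => hj.
have hjw : j \in w by rewrite hw.2; lia.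
have hi : (index j w < size w)%N by rewrite index_mem.
have hn := nth_index 0 hjw.
have [e1 e2] := profile_pair_insert_max hw (leqnn _) hjw.
rewrite /profile_pair e1 e2 (ltn_eqF hi) /=; congr [:: _; _].
case: eqP => //= he; symmetry; rewrite /next_of he nth_default //; lia.
Qed.

(* The index in [profile w] of the letter turned up by inserting the maximum at
   position [k], between [x = w_k] (or 0) and [y = w_(k+1)]. *)
Definition flip_pos (w : seq nat) (k : nat) : nat :=
  let x := nth 0 (0 :: w) k in let y := nth 0 w k in
  if (y < x)%N then (x.-1).*2 else (y.-1).*2.+1.

Section InsertionNeighbours.
Variables (w : seq nat) (k : nat).
Hypothesis hw : is_perm_word w.
Hypothesis hk : (k < size w)%N.

Let x := nth 0 (0 :: w) k.
Let y := nth 0 w k.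

Lemma right_nbr_mem : y \in w.
Proof. by rewrite mem_nth. Qed.

Lemma index_right_nbr : index y w = k.
Proof. by rewrite index_uniq //; case: hw. Qed.

Lemma right_nbr_range : (0 < y <= size w)%N.
Proof. by rewrite -hw.2 right_nbr_mem. Qed.

Lemma prev_right_nbr : prev_of w y = x.
Proof. by rewrite /prev_of index_right_nbr. Qed.

Lemma left_nbr_mem : (0 < k)%N -> x \in w.
Proof. by case: k hk @x => [|k0] //= hk0 _; rewrite mem_nth // ltnW. Qed.

Lemma left_nbr_le : (x <= size w)%N.
Proof.
case: (posnP k) => h; first by rewrite /x h.
by have := left_nbr_mem h; rewrite hw.2; lia.
Qed.

Lemma index_left_nbr : (0 < k)%N -> (index x w).+1 = k.
Proof.
case: k hk @x => [|k0] //= hk0 _.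
by rewrite index_uniq //; [ exact: ltnW | case: hw].
Qed.

Lemma next_left_nbr : (0 < k)%N -> next_of w x = y.
Proof.
move=> h; rewrite /next_of index_left_nbr //.
by rewrite (@set_nth_default _ w 0).
Qed.

Lemma left_nbr_neq_right : x != y.
Proof.
case: (posnP k) => h.
  by rewrite /x h /=; have := right_nbr_range; lia.
apply/eqP => exy.
have := index_left_nbr h; rewrite exy index_right_nbr; lia.
Qed.

Lemma profile_pair_insert_max_flip j (e : bool) : j \in w ->
  nth false (profile_pair (insert_max k w) j) e =
  (((j.-1).*2 + e)%N == flip_pos w k) || nth false (profile_pair w j) e.
Proof.
move=> hj; have hi : (index j w < size w)%N by rewrite index_mem.
have hn := nth_index 0 hj.
have hjs : (0 < j <= size w)%N by rewrite -hw.2.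
have [e1 e2] := profile_pair_insert_max hw (ltnW hk) hj.
have ys := right_nbr_range; have xny := left_nbr_neq_right; have xs := left_nbr_le.
rewrite /flip_pos -/x -/y /profile_pair; case: e => /=.
  rewrite e2; case: (eqVneq j y) => [ejy | hjy].
    rewrite ejy index_right_nbr eqxx prev_right_nbr /= -!mul2n.
    by case: (ltnP y x) => hyx; lia.
  have hik : (index j w == k) = false.
    apply/eqP => hik; move/eqP: hjy; apply; by rewrite -hn hik.
  rewrite hik /=; rewrite -!mul2n; case: (ltnP y x) => hyx; move/eqP: hjy; lia.
rewrite e1; case: (boolP ((index j w).+1 == k)) => hik /=.
  have k0 : (0 < k)%N by move/eqP: hik; lia.
  have ejx : j = x.
    rewrite -hn -(nth_index 0 (left_nbr_mem k0)); congr nth.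
    by have := index_left_nbr k0; move/eqP: hik; lia.
  rewrite ejx next_left_nbr // -!mul2n; case: (ltnP y x) => hyx; move/eqP: xny; lia.
have -> : ((j.-1).*2 + 0 == (if (y < x)%N then (x.-1).*2 else (y.-1).*2.+1)) = false.
  case: (ltnP y x) => hyx; rewrite -!mul2n; last lia.
  apply/eqP => hjx.
  have ejx : j = x by lia.
  have k0 : (0 < k)%N by case: (posnP k) => h //; move: hyx; rewrite /x h.
  by move: hik; rewrite ejx index_left_nbr // eqxx.
by [].
Qed.

End InsertionNeighbours.

Lemma nth_profile_pair w j (e : bool) : is_perm_word w -> (0 < j <= size w)%N ->
  nth false (profile w) ((j.-1).*2 + e) = nth false (profile_pair w j) e.
Proof.
move=> hw hj; rewrite nth_profile //; last by case: e; rewrite -mul2n; lia.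
rewrite addnC half_bit_double oddD odd_double addbF oddb prednK //; lia.
Qed.

Lemma profile_insert_max_flip w k : is_perm_word w -> (k < size w)%N ->
  [/\ (flip_pos w k < 2 * size w)%N, nth false (profile w) (flip_pos w k) = false &
      profile (insert_max k w) =
        set_nth false (profile w) (flip_pos w k) true ++ [:: false; false]].
Proof.
move=> hw hk.
have ys := right_nbr_range hw hk; have xs := left_nbr_le hw hk.
have [hq hn] : (flip_pos w k < 2 * size w)%N /\ nth false (profile w) (flip_pos w k) = false.
  rewrite /flip_pos; case: (ltnP (nth 0 w k) (nth 0 (0 :: w) k)) => hyx.
    split; first by rewrite -mul2n; lia.
    have k0 : (0 < k)%N by case: (posnP k) => h //; move: hyx; rewrite h.
    rewrite -[(_.-1).*2]addn0 (@nth_profile_pair w _ false) //; last lia.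
    by rewrite /profile_pair /= (next_left_nbr hw hk k0); apply/negbTE; rewrite -leqNgt ltnW.
  split; first by rewrite -mul2n; lia.
  rewrite -addn1 (@nth_profile_pair w _ true) //.
  by rewrite /profile_pair /= (prev_right_nbr hw hk); apply/negbTE; rewrite -leqNgt.
split => //.
rewrite profile_insert_maxE ?(ltnW hk) // (ltn_eqF hk); congr (_ ++ _).
have hsz : size (set_nth false (profile w) (flip_pos w k) true) = (2 * size w)%N.
  by rewrite size_set_nth size_profile //; apply/maxn_idPr.
apply: (eq_from_nth (x0 := false)).
  by rewrite hsz size_flatten_pairs ?all_size_profile_pair // size_map size_iota.
rewrite size_flatten_pairs ?all_size_profile_pair // size_map size_iota => i hi.
rewrite nth_flatten_profile_pairs // nth_set_nth /= nth_profile //.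
have hj : (i./2).+1 \in w.
  by rewrite hw.2; move: hi; rewrite mul2n -ltn_half_double; lia.
rewrite (profile_pair_insert_max_flip hw hk) //=.
have -> : ((i./2).*2 + odd i)%N = i by rewrite addnC odd_double_half.
by case: eqP.
Qed.

Lemma flip_pos_inj w k1 k2 : is_perm_word w -> (k1 < size w)%N -> (k2 < size w)%N ->
  flip_pos w k1 = flip_pos w k2 -> k1 = k2.
Proof.
move=> hw h1 h2.
have y1 := right_nbr_range hw h1; have y2 := right_nbr_range hw h2.
have iy1 := index_right_nbr hw h1; have iy2 := index_right_nbr hw h2.
rewrite /flip_pos; case: (ltnP (nth 0 w k1) (nth 0 (0 :: w) k1)) => hyx1;
case: (ltnP (nth 0 w k2) (nth 0 (0 :: w) k2)) => hyx2; rewrite -!mul2n => e; try lia.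
  have ex : nth 0 (0 :: w) k1 = nth 0 (0 :: w) k2 by lia.
  have k10 : (0 < k1)%N by case: (posnP k1) => h //; move: hyx1; rewrite h.
  have k20 : (0 < k2)%N by case: (posnP k2) => h //; move: hyx2; rewrite h.
  have := index_left_nbr hw h1 k10; have := index_left_nbr hw h2 k20; rewrite ex; lia.
have ey : nth 0 w k1 = nth 0 w k2 by lia.
by rewrite -iy1 ey iy2.
Qed.

Lemma flip_pos_surj w q : is_perm_word w -> (q < 2 * size w)%N -> nth false (profile w) q = false ->
  exists2 k, (k < size w)%N & flip_pos w k = q.
Proof.
move=> hw hq; rewrite nth_profile //.
set j := (q./2).+1.
have hj : j \in w by rewrite hw.2 /j; move: hq; rewrite mul2n -ltn_half_double; lia.
have hi : (index j w < size w)%N by rewrite index_mem.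
have hn := nth_index 0 hj.
have hjs : (0 < j <= size w)%N by rewrite -hw.2.
have eq := odd_double_half q.
rewrite /profile_pair; case hoq: (odd q) eq => /= eq hnx.
  exists (index j w) => //.
  rewrite /flip_pos -/(prev_of w j) hn ifF; last by move: hnx; rewrite /prev_of; lia.
  rewrite /j /=; lia.
have hi1 : ((index j w).+1 < size w)%N.
  move: hnx; rewrite /next_of; case: (ltnP (index j w).+1 (size w)) => // h.
  by rewrite nth_default //; lia.
exists (index j w).+1 => //.
rewrite /flip_pos /= hn.
have hne : nth 0 w (index j w).+1 != j.
  by rewrite -{2}hn nth_uniq //; [lia | case: hw].
have : (nth 0 w (index j w).+1 <= j)%N.
  by move: hnx; rewrite /next_of (@set_nth_default _ w 0) //; lia.
move: hne => /eqP hne hle; rewrite ifT; last lia.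
rewrite /j /=; rewrite -mul2n; lia.
Qed.

Lemma profile_insert_max_inj w k1 k2 : is_perm_word w -> (k1 <= size w)%N -> (k2 <= size w)%N ->
  profile (insert_max k1 w) = profile (insert_max k2 w) -> k1 = k2.
Proof.
move=> hw h1 h2 e.
have hs k :
    size (flatten [seq profile_pair (insert_max k w) j | j <- iota 1 (size w)]) = (2 * size w)%N.
  by rewrite size_flatten_pairs ?all_size_profile_pair // size_map size_iota.
have e2 := congr1 (nth false ^~ (2 * size w)%N) e.
move: e2; rewrite /= !profile_insert_maxE // !nth_cat !hs ltnn subnn /= => e2.
case: (ltnP k1 (size w)) => l1; case: (ltnP k2 (size w)) => l2.
- have [q1 n1 p1] := profile_insert_max_flip hw l1.
  have [q2 _ p2] := profile_insert_max_flip hw l2.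
  have size_flip k' : (flip_pos w k' < 2 * size w)%N ->
      size (set_nth false (profile w) (flip_pos w k') true) = (2 * size w)%N.
    by move=> q; rewrite size_set_nth size_profile //; apply/maxn_idPr.
  apply: (flip_pos_inj hw l1 l2).
  have := congr1 (nth false ^~ (flip_pos w k1)) e; rewrite /= p1 p2.
  rewrite !nth_cat !size_flip // q1 !nth_set_nth /= eqxx.
  by case: eqP => // _; rewrite n1.
- by move: e2; rewrite (ltn_eqF l1); lia.
- by move: e2; rewrite (ltn_eqF l2); lia.
- lia.
Qed.

Lemma lifts_profile_insert_max m w k : is_perm_word w -> (k <= size w)%N ->
  is_dyck m (profile w) -> exists p, lifts (profile w) (profile (insert_max k w)) p.
Proof.
move=> hw hk [_ [_ endD]].
case: (ltnP k (size w)) => hlt.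
  have [hq hn ->] := profile_insert_max_flip hw hlt.
  by exists (flip_pos w k); apply: lifts_set_nth_up => //; rewrite size_profile.
have -> : k = size w by lia.
by exists (size (profile w)); rewrite profile_insert_max_last //; apply: lifts_cat_up_down.
Qed.

Lemma is_perm_word_nil : is_perm_word [::].
Proof. by split => // j; rewrite in_nil /=; lia. Qed.

Lemma dyck_nil : is_dyck 0 [::].
Proof. by split=> //; split; [move=> x _ |]; rewrite /height ?take_nil big_nil. Qed.

Lemma dyck1E E : is_dyck 1 E -> E = [:: true; false].
Proof.
case=> sE [posE endE]; have h1 := posE 1%N ltac:(rewrite sE).
case: E sE posE endE h1 => [|a [|b []]] // _ _.
by rewrite /height /= !big_cons !big_nil; case: a; case: b => //=; lia.
Qed.

Lemma dyck_profile n w : is_perm_word w -> size w = n -> is_dyck n (profile w).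
Proof.
elim: n w => [|n IH] w hw sw; first by rewrite (size0nil sw); apply: dyck_nil.
have [w' [k [hw' sw' hk ->]]] := insert_max_decomp hw sw.
rewrite -sw' in hk; have dD := IH _ hw' sw'.
have [p] := lifts_profile_insert_max hw' hk dD.
exact: dyck_lifts dD.
Qed.

Definition chain_word (w : seq nat) : seq (seq bool) :=
  [seq profile (derived (size w - i) w) | i <- iota 1 (size w)].

Lemma chain_word_insert_max w k : is_perm_word w ->
  chain_word (insert_max k w) = rcons (chain_word w) (profile (insert_max k w)).
Proof.
move=> hw; rewrite /chain_word size_insert_max.
have -> : iota 1 (size w).+1 = iota 1 (size w) ++ [:: (size w).+1].
  by have := iotaD 1 (size w) 1; rewrite addn1 add1n => ->.
rewrite map_cat cats1 /= subnn; congr rcons.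
apply/eq_in_map => i; rewrite mem_iota => hi.
have -> : ((size w).+1 - i = (size w - i).+1)%N by lia.
by rewrite /derived iterSr del_max_insert_max.
Qed.

Lemma nth_chain_word_last w : (0 < size w)%N ->
  nth [::] (chain_word w) (size w).-1 = profile w.
Proof.
move=> h; rewrite (nth_map 0); last by rewrite size_iota; lia.
rewrite nth_iota; last lia.
by have -> : (size w - (1 + (size w).-1) = 0)%N by lia.
Qed.

Lemma is_chain_chain_word n w : is_perm_word w -> size w = n -> is_chain n (chain_word w).
Proof.
elim: n w => [|n IH] w hw sw; first by rewrite (size0nil sw).
have [w' [k [hw' sw' hk ->]]] := insert_max_decomp hw sw.
rewrite -sw' in hk; have [sc [hd hs]] := IH _ hw' sw'.
have dD := dyck_profile hw' sw'.
have [p lDE] := lifts_profile_insert_max hw' hk dD.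
rewrite chain_word_insert_max //; split; first by rewrite size_rcons sc.
split.
  move=> i hi; rewrite nth_rcons sc.
  case: ltnP => h; first exact: hd.
  have ei : i = n by lia.
  by subst i; rewrite eqxx; apply: dyck_lifts dD lDE.
move=> i hi; rewrite !nth_rcons sc.
case: (ltnP i.+1 n) => h; first by rewrite (ltnW h); apply: hs.
have ei : i = n.-1 by lia.
have n0 : (0 < n)%N by lia.
rewrite ifT; last lia.
rewrite ifT; last lia.
rewrite ei -sw' nth_chain_word_last ?sw' //.
exact: sqsub_lifts dD lDE.
Qed.

Lemma chain_word_inj n w1 w2 : is_perm_word w1 -> is_perm_word w2 ->
  size w1 = n -> size w2 = n -> chain_word w1 = chain_word w2 -> w1 = w2.
Proof.
elim: n w1 w2 => [|n IH] w1 w2 hw1 hw2 s1 s2.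
  by rewrite (size0nil s1) (size0nil s2).
have [w1' [k1 [hw1' sw1' hk1 ->]]] := insert_max_decomp hw1 s1.
have [w2' [k2 [hw2' sw2' hk2 ->]]] := insert_max_decomp hw2 s2.
rewrite !chain_word_insert_max // => /rcons_inj [e1 e2].
have ew := IH _ _ hw1' hw2' sw1' sw2' e1.
subst w2'; congr insert_max.
by apply: (profile_insert_max_inj hw1'); rewrite ?sw1'.
Qed.

Lemma chain_word_surj n c : is_chain n c ->
  exists w, [/\ is_perm_word w, size w = n & chain_word w = c].
Proof.
elim: n c => [|n IH] c [sc [hd hs]].
  by exists [::]; split; [exact: is_perm_word_nil | by [] | rewrite (size0nil sc)].
case/lastP: c sc hd hs => [|c' E] //; rewrite size_rcons => -[sc'] hd hs.
have hc' : is_chain n c'.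
  split => //; split.
    by move=> i hi; have := hd i (leqW hi); rewrite nth_rcons sc' hi.
  by move=> i hi; have := hs i (leqW hi); rewrite !nth_rcons sc' hi (ltnW hi).
have [w' [hw' sw' ec']] := IH _ hc'.
have dE : is_dyck n.+1 E by have := hd n (ltnSn n); rewrite nth_rcons sc' ltnn eqxx.
have ok k : (k <= size w')%N -> profile (insert_max k w') = E ->
    exists w, [/\ is_perm_word w, size w = n.+1 & chain_word w = rcons c' E].
  move=> hk eE; exists (insert_max k w'); split.
  - exact: is_perm_word_insert_max.
  - by rewrite size_insert_max sw'.
  - by rewrite chain_word_insert_max // ec' eE.
case: (posnP n) => n0.
  rewrite n0 in sw' dE; rewrite (size0nil sw') in ok.
  by apply: (ok 0%N) => //; rewrite (dyck1E dE).
have hsub : sqsub (profile w') E.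
  have := hs n.-1 ltac:(lia); rewrite !nth_rcons sc' ifT; last lia.
  rewrite prednK // ltnn eqxx -ec' -sw' nth_chain_word_last //; lia.
have dD := dyck_profile hw' sw'.
case: (sqsub_dyck_cases n0 dD dE hsub) => [eE | [p hp [hn eE]]].
  by apply: (ok (size w')) => //; rewrite profile_insert_max_last.
rewrite size_profile // in hp; have [k hk ek] := flip_pos_surj hw' hp hn.
apply: (ok k); first exact: ltnW.
by have [_ _ ->] := profile_insert_max_flip hw' hk; rewrite ek eE.
Qed.

Lemma perm_word_is_perm_word n (s : 'S_n) : is_perm_word (perm_word s).
Proof.
split.
  rewrite map_inj_uniq ?enum_uniq // => i j /succn_inj /val_inj; exact: perm_inj.
move=> j; rewrite size_map size_enum_ord; apply/mapP/idP.
  by move=> [i _ ->]; rewrite ltn_ord.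
move=> /andP [h0 hj].
have hk : (j.-1 < n)%N by lia.
exists ((s^-1)%g (Ordinal hk)); first by rewrite mem_enum.
by rewrite permKV /=; lia.
Qed.

Lemma size_perm_word n (s : 'S_n) : size (perm_word s) = n.
Proof. by rewrite size_map size_enum_ord. Qed.

Lemma perm_word_inj n : injective (@perm_word n).
Proof.
move=> s1 s2 /eq_in_map h; apply/permP => i; apply: val_inj.
by apply: succn_inj; apply: h; rewrite mem_enum.
Qed.

Lemma perm_word_surj n w : is_perm_word w -> size w = n -> exists s : 'S_n, perm_word s = w.
Proof.
move=> [hu hm] sw.
have wP (i : 'I_n) : (0 < nth 0 w i <= n)%N.
  have : nth 0 w i \in w by rewrite mem_nth // sw.
  by rewrite hm sw.
have H (i : 'I_n) : ((nth 0 w i).-1 < n)%N by have := wP i; lia.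
pose f (i : 'I_n) : 'I_n := Ordinal (H i).
have finj : injective f.
  move=> i j /(congr1 val) /= e; apply: val_inj => /=.
  apply/eqP; rewrite -(nth_uniq 0 _ _ hu) ?sw //.
  by apply/eqP; have := wP i; have := wP j; move: e; rewrite /f /=; lia.
exists (perm finj).
have -> : perm_word (perm finj) = [seq nth 0 w (val i) | i <- enum 'I_n].
  by apply/eq_map => i; rewrite permE /=; have := wP i; lia.
by rewrite (map_comp (nth 0 w) val) val_enum_ord -sw -/(mkseq _ _) mkseq_nth.
Qed.

Lemma chain_of_perm_word n (s : 'S_n) : chain_of s = chain_word (perm_word s).
Proof. by rewrite /chain_of /chain_word size_perm_word. Qed.

Unset Implicit Arguments.

Theorem mainTheorem7 (n : nat) (hn : 1 <= n) :
  injective (@chain_of n) /\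
  (forall s : 'S_n, is_chain n (chain_of s)) /\
  (forall c : seq (seq bool), is_chain n c -> exists s : 'S_n, chain_of s = c).
Proof.
split.
  move=> s1 s2; rewrite !chain_of_perm_word => e; apply: perm_word_inj.
  exact: chain_word_inj (perm_word_is_perm_word s1) (perm_word_is_perm_word s2)
    (size_perm_word s1) (size_perm_word s2) e.
split.
  move=> s; rewrite chain_of_perm_word.
  exact: is_chain_chain_word (perm_word_is_perm_word s) (size_perm_word s).
move=> c /chain_word_surj [w [hw sw <-]].
have [s <-] := perm_word_surj hw sw.
by exists s; rewrite chain_of_perm_word.
Qed.
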